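(* Let $(M,\mathcal{H},\langle\cdot,\cdot\rangle)$ be a quaternionic contact manifold of dimension $4n+3$, locally $\mathcal{H}=\bigcap_{i=1}^3\ker\eta_i$ with associated almost complex structures $I_1,I_2,I_3$ and Reeb vector fields $V_1,V_2,V_3$. Let $\{X_1,\dots,X_{4n},V_1,V_2,V_3\}$ be a local orthonormal frame (for the Riemannian metric $g$) near a point such that $\{X_1,\dots,X_{4n}\}$ is an $Sp(n)Sp(1)$-frame, and let $\{\theta_1,\dots,\theta_{4n},\eta_1,\eta_2,\eta_3\}$ be its dual coframe. Then the Popp measure $\mathcal{P}$ of the subriemannian manifold $(M,\mathcal{H},\langle\cdot,\cdot\rangle)$ is $$\mathcal{P}=\frac{1}{(16n)^{3/2}}\,\theta_1\wedge\cdots\wedge\theta_{4n}\wedge\eta_1\wedge\eta_2\wedge\eta_3 .$$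
   Context: A quaternionic contact (qc) manifold $(M,\mathcal{H},\langle\cdot,\cdot\rangle)$ is a connected orientable manifold of dimension $4n+3$ with a corank-3 distribution $\mathcal{H}$ and a smooth fiberwise inner product $\langle\cdot,\cdot\rangle$ on $\mathcal{H}$ such that locally $\mathcal{H}=\bigcap_{i=1}^3\ker\eta_i$ for 1-forms $\eta_1,\eta_2,\eta_3$, and there are almost complex structures $I_1,I_2,I_3$ on $\mathcal{H}$ with $I_i^2=I_1I_2I_3=-\mathrm{Id}$ and $2\langle I_iX,Y\rangle=d\eta_i(X,Y)$ for horizontal $X,Y$. The Reeb vector fields $V_1,V_2,V_3$ are defined by $\eta_i(V_j)=\delta_{ij}$ and $(V_i\lrcorner d\eta_j)|_{\mathcal{H}}=-(V_j\lrcorner d\eta_i)|_{\mathcal{H}}$ (for $n=1$ their existence is assumed). The Riemannian metric $g$ extends $\langle\cdot,\cdot\rangle$ by $g=\langle\cdot,\cdot\rangle\oplus(\eta_1^2+\eta_2^2+\eta_3^2)$, with $\mathcal{H}\perp\mathrm{span}\{V_i\}$. An $Sp(n)Sp(1)$-frame is an orthonormal frame $\{X_1,\dots,X_{4n}\}$ of $\mathcal{H}$ with $I_iX_{4k+1}=X_{4k+i+1}$ for $k=0,\dots,n-1$, $i=1,2,3$. The Popp measure of a regular step-two subriemannian manifold, expressed in a local frame $\{X_1,\dots,X_{4n},V_1,V_2,V_3\}$ with $X_\alpha$ orthonormal in $\mathcal{H}$ and dual coframe $\{\theta_\alpha,\eta_i\}$, is $\frac{1}{\sqrt{\det B}}\theta_1\wedge\cdots\wedge\theta_{4n}\wedge\eta_1\wedge\eta_2\wedge\eta_3$,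 where $B_{ij}=\sum_{\alpha,\beta}b^i_{\alpha\beta}b^j_{\alpha\beta}$ and $b^i_{\alpha\beta}=\eta_i([X_\alpha,X_\beta])$. *)

(* Local (chart) model of a quaternionic contact manifold: an open set U of
   R^(4n+3) (points and tangent vectors are row vectors 'rV[R]_(4n+3)). *)
From HB Require Import structures.
From mathcomp Require Import all_boot all_order all_algebra.
From mathcomp Require Import all_classical all_reals all_analysis.
Set Implicit Arguments. Unset Strict Implicit. Unset Printing Implicit Defensive.
Import Order.TTheory GRing.Theory Num.Theory.
Import numFieldNormedType.Exports.
Local Open Scope classical_set_scope.
Local Open Scope ring_scope.

Section QC.
Variables (R : realType) (N : nat).
Local Notation V := 'rV[R]_N.

(* pairing of a covector (1-form value) with a vector *)
Definition pair (w v : V) : R := \sum_(k < N) w 0 k * v 0 k.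

Definition lie_bracket (X Y : V -> V) (p : V) : V :=
  'D_(X p) Y p - 'D_(Y p) X p.

(* exterior derivative of a 1-form eta, evaluated at p on (v,w):
   d eta(v,w) = v(eta(w)) - w(eta(v)) for constant v, w
   (convention d eta(X,Y) = X eta(Y) - Y eta(X) - eta([X,Y])) *)
Definition dform (eta : V -> V) (p : V) (v w : V) : R :=
  'D_v (fun q => pair (eta q) w) p - 'D_w (fun q => pair (eta q) v) p.

Definition horizontal (eta : 'I_3 -> V -> V) (p v : V) : Prop :=
  forall i, pair (eta i p) v = 0.

Definition qc_local_frame (n : nat) (U : set V)
  (eta : 'I_3 -> V -> V)
  (I : 'I_3 -> V -> V -> V)
  (gH : V -> V -> V -> R)
  (Vr : 'I_3 -> V -> V)
  (X : 'I_(4 * n) -> V -> V)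
  : Prop :=
  [/\ (0 < n)%N, N = (4 * n + 3)%N, open U &
   forall p, U p ->
   (
       (forall i, differentiable (eta i) p) /\
       (forall a, differentiable (X a) p) /\
       (forall i, differentiable (Vr i) p) /\
       ((forall a u v w, horizontal eta p u -> horizontal eta p v ->
          horizontal eta p w ->
          gH p (a *: u + v) w = a * gH p u w + gH p v w)
       /\ (forall u v, horizontal eta p u -> horizontal eta p v ->
          gH p u v = gH p v u)
       /\ (forall u, horizontal eta p u -> u != 0 -> 0 < gH p u u)) /\
       ((forall i v, horizontal eta p v -> horizontal eta p (I i p v))
       /\ (forall i a u v, horizontal eta p u -> horizontal eta p v ->
            I i p (a *: u + v) = a *: I i p u + I i p v)
       /\ (forall i v, horizontal eta p v -> I i p (I i p v) = - v)
       /\ (forall v, horizontal eta p v ->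
            I 0 p (I 1 p (I 2 p v)) = - v)) /\
       (forall i u v, horizontal eta p u -> horizontal eta p v ->
          2 * gH p (I i p u) v = dform (eta i) p u v) /\
       ((forall i j, pair (eta i p) (Vr j p) = (i == j)%:R)
       /\ (forall i j w, horizontal eta p w ->
            dform (eta j) p (Vr i p) w = - dform (eta i) p (Vr j p) w)) /\
       (* {X_alpha} orthonormal frame of H (hence {X, Vr} is g-orthonormal) *)
       ((forall a, horizontal eta p (X a p))
       /\ (forall a b, gH p (X a p) (X b p) = (a == b)%:R)
       (* Sp(n)Sp(1)-frame: I_i X_{4k+1} = X_{4k+i+1} (0-based below) *)
       /\ (forall (k : 'I_n) (i : 'I_3) (a b : 'I_(4 * n)),
            val a = (4 * k)%N -> val b = (4 * k + i.+1)%N ->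
            I i p (X a p) = X b p)))].

Definition bcoef (n : nat) (eta : 'I_3 -> V -> V) (X : 'I_(4 * n) -> V -> V)
  (p : V) (i : 'I_3) (a b : 'I_(4 * n)) : R :=
  pair (eta i p) (lie_bracket (X a) (X b) p).

Definition Bmx (n : nat) (eta : 'I_3 -> V -> V) (X : 'I_(4 * n) -> V -> V)
  (p : V) : 'M[R]_3 :=
  \matrix_(i, j) \sum_(a < 4 * n) \sum_(b < 4 * n)
     bcoef eta X p i a b * bcoef eta X p j a b.

(* Popp measure in the frame: (1/sqrt(det B)) theta_1 /\ ... /\ eta_3;
   popp_coeff is its coefficient relative to the coframe volume form. *)
Definition popp_coeff (n : nat) (eta : 'I_3 -> V -> V)
  (X : 'I_(4 * n) -> V -> V) (p : V) : R :=
  1 / Num.sqrt (\det (Bmx eta X p)).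

End QC.

(* Since X_a and X_b are horizontal, b^i_ab = eta_i([X_a, X_b]) = - d eta_i (X_a, X_b)
   = - 2 <I_i X_a, X_b>.  The quaternion relations and the Sp(n)Sp(1) condition make
   every I_i X_a equal to plus or minus a frame vector, so by Parseval
   sum_b b^i_ab b^j_ab = 4 <I_j X_a, I_i X_a> = 4 delta_ij.  Summing over the 4n
   indices a gives B = 16n Id, hence det B = (16n)^3. *)
From HB Require Import structures.
From mathcomp Require Import all_boot all_order all_algebra.
From mathcomp Require Import all_classical all_reals all_analysis.
From mathcomp Require Import lra zify.
Set Implicit Arguments. Unset Strict Implicit. Unset Printing Implicit Defensive.
Import Order.TTheory GRing.Theory Num.Theory.
Import numFieldNormedType.Exports.
Local Open Scope classical_set_scope.
Local Open Scope ring_scope.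

Section PairingCalculus.
Variables (R : realType) (N : nat).
Local Notation V := 'rV[R]_N.

Lemma pair0r (w : V) : pair w 0 = 0.
Proof. by rewrite /pair big1 // => k _; rewrite mxE mulr0. Qed.

Lemma pairPr (w : V) a u v : pair w (a *: u + v) = a * pair w u + pair w v.
Proof.
rewrite /pair mulr_sumr -big_split; apply: eq_bigr => k _.
by rewrite !mxE mulrDr mulrCA.
Qed.

Lemma pairBr (w u v : V) : pair w (u - v) = pair w u - pair w v.
Proof. by rewrite /pair -sumrB; apply: eq_bigr => k _; rewrite !mxE mulrBr. Qed.

Lemma dform_antisym (e : V -> V) p u v : dform e p u v = - dform e p v u.
Proof. by rewrite /dform opprB. Qed.

Lemma derivable_coord (f : V -> V) p v k :
  differentiable f p -> derivable (fun q => f q 0 k) p v.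
Proof. by move=> df; apply/(derivable_mxP _ _ _).1; exact: diff_derivable. Qed.

Lemma derive_coord (f : V -> V) p v k :
  differentiable f p -> 'D_v (fun q => f q 0 k) p = 'D_v f p 0 k.
Proof. by move=> df; rewrite (derive_mx (diff_derivable (v := v) df)) mxE. Qed.

Lemma derive_pair (f g : V -> V) p v :
  differentiable f p -> differentiable g p ->
  'D_v (fun q => pair (f q) (g q)) p = pair ('D_v f p) (g p) + pair (f p) ('D_v g p).
Proof.
move=> df dg.
have -> : (fun q => pair (f q) (g q)) =
    \sum_(k < N) (fun q => f q 0 k * g q 0 k) by apply/funext => q; rewrite fct_sumE.
rewrite derive_sum => [|k]; last by apply: derivableM; exact: derivable_coord.
rewrite /pair -big_split; apply: eq_bigr => k _.
rewrite deriveM ?derive_coord //; try exact: derivable_coord.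
by rewrite addrC /GRing.scale /= mulrC [f p 0 k * _]mulrC.
Qed.

Lemma pair_derive_orth (e Y : V -> V) p v :
  (\forall q \near p, pair (e q) (Y q) = 0) ->
  differentiable e p -> differentiable Y p ->
  pair (e p) ('D_v Y p) = - 'D_v (fun q => pair (e q) (Y p)) p.
Proof.
move=> eY0 de dY.
have : 'D_v (fun q => pair (e q) (Y q)) p = 0.
  by rewrite (near_eq_derive v (g := cst 0)) ?derive_cst.
rewrite derive_pair // => /eqP; rewrite addrC addr_eq0 => /eqP ->.
by rewrite (derive_pair v de (differentiable_cst _ _)) derive_cst pair0r addr0.
Qed.

Lemma pair_lie_bracket_orth (e Y Z : V -> V) p :
  (\forall q \near p, pair (e q) (Y q) = 0) ->
  (\forall q \near p, pair (e q) (Z q) = 0) ->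
  differentiable e p -> differentiable Y p -> differentiable Z p ->
  pair (e p) (lie_bracket Y Z p) = - dform e p (Y p) (Z p).
Proof.
move=> eY0 eZ0 de dY dZ.
rewrite /lie_bracket pairBr !pair_derive_orth //.
by rewrite /dform opprB opprK addrC.
Qed.

End PairingCalculus.
Section QuaternionicFrame.
Variables (R : realFieldType) (V : lmodType R).
Variables (H : V -> Prop) (g : V -> V -> R) (J : 'I_3 -> V -> V).
Hypothesis H0 : H 0.
Hypothesis HP : forall a u v, H u -> H v -> H (a *: u + v).
Hypothesis gPl : forall a u v w, H u -> H v -> H w ->
  g (a *: u + v) w = a * g u w + g v w.
Hypothesis g_sym : forall u v, H u -> H v -> g u v = g v u.
Hypothesis JH : forall i v, H v -> H (J i v).
Hypothesis JP : forall i a u v, H u -> H v -> J i (a *: u + v) = a *: J i u + J i v.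
Hypothesis JJ : forall i v, H v -> J i (J i v) = - v.
Hypothesis J012 : forall v, H v -> J 0 (J 1 (J 2 v)) = - v.
(* Skewness is what 2 g (J_i u) v = d eta_i (u, v) yields, d eta_i being alternating. *)
Hypothesis J_skew : forall i u v, H u -> H v -> g (J i u) v = - g u (J i v).

Lemma HZ a u : H u -> H (a *: u).
Proof. by move=> hu; have := HP a hu H0; rewrite addr0. Qed.

Lemma J0 i : J i 0 = 0.
Proof.
apply: (@addrI _ (J i 0)); rewrite addr0 -{1}(scale1r (J i 0)) -JP //.
by rewrite scaler0 addr0.
Qed.

Lemma JN i u : H u -> J i (- u) = - J i u.
Proof. by move=> hu; have := JP i (-1) hu H0; rewrite !scaleN1r !addr0 J0 addr0. Qed.

Lemma g0l w : H w -> g 0 w = 0.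
Proof. by move=> hw; have := gPl 1 H0 H0 hw; rewrite scaler0 addr0; lra. Qed.

Lemma gZl a u w : H u -> H w -> g (a *: u) w = a * g u w.
Proof. by move=> hu hw; rewrite -[a *: u]addr0 gPl // g0l // addr0. Qed.

Lemma gZr a u w : H u -> H w -> g w (a *: u) = a * g w u.
Proof. by move=> hu hw; rewrite (g_sym hw (HZ a hu)) gZl // g_sym. Qed.

Lemma g_self_J i u : H u -> g u (J i u) = 0.
Proof. by move=> hu; have := J_skew i hu hu; rewrite (g_sym (JH i hu) hu); lra. Qed.

Lemma J01 v : H v -> J 0 (J 1 v) = J 2 v.
Proof.
move=> hv; apply: oppr_inj; rewrite -(J012 (JH 2 hv)).
by rewrite (JJ 2 hv) (JN 1 hv) (JN 0 (JH 1 hv)).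
Qed.

Lemma J12 v : H v -> J 1 (J 2 v) = J 0 v.
Proof.
move=> hv; apply: oppr_inj.
by rewrite -(JJ 0 (JH 1 (JH 2 hv))) (J012 hv) (JN 0 hv).
Qed.

Lemma J02 v : H v -> J 0 (J 2 v) = - J 1 v.
Proof. by move=> hv; rewrite -(J01 hv) (JJ 0 (JH 1 hv)). Qed.

Lemma J10 v : H v -> J 1 (J 0 v) = - J 2 v.
Proof. by move=> hv; rewrite -(J12 hv) (JJ 1 (JH 2 hv)). Qed.

Lemma J21 v : H v -> J 2 (J 1 v) = - J 0 v.
Proof. by move=> hv; rewrite -(J01 (JH 1 hv)) (JJ 1 hv) (JN 0 hv). Qed.

Lemma J20 v : H v -> J 2 (J 0 v) = J 1 v.
Proof.
move=> hv; rewrite -(J01 (JH 0 hv)) (J10 hv) (JN 0 (JH 2 hv)).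
by rewrite (J02 hv) opprK.
Qed.

Lemma ord3_cases (i : 'I_3) : [\/ i = 0, i = 1 | i = 2].
Proof. by case: i => [[|[|[|//]]] ?]; [apply: Or31|apply: Or32|apply: Or33]; apply: val_inj. Qed.

Lemma J_mul_neq i j : i != j ->
  exists l (s : R), forall v, H v -> J i (J j v) = s *: J l v.
Proof.
case: (ord3_cases i) => ->; case: (ord3_cases j) => -> // _.
- by exists 2, 1 => v hv; rewrite J01 ?scale1r.
- by exists 1, (-1) => v hv; rewrite J02 ?scaleN1r.
- by exists 2, (-1) => v hv; rewrite J10 ?scaleN1r.
- by exists 0, 1 => v hv; rewrite J12 ?scale1r.
- by exists 1, 1 => v hv; rewrite J20 ?scale1r.
- by exists 0, (-1) => v hv; rewrite J21 ?scaleN1r.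
Qed.

Lemma g_J_J i j u : H u -> g (J i u) (J j u) = (i == j)%:R * g u u.
Proof.
move=> hu; rewrite (J_skew i hu (JH j hu)); have [<-|ne] := eqVneq i j.
  by rewrite (JJ i hu) -scaleN1r (gZr _ hu hu) mulN1r opprK mul1r.
have [l [s E]] := J_mul_neq ne.
by rewrite (E _ hu) (gZr _ (JH l hu) hu) (g_self_J l hu) mulr0 oppr0 mul0r.
Qed.

Variables (n : nat) (X : 'I_(4 * n) -> V).
Hypothesis XH : forall a, H (X a).
Hypothesis X_orthonormal : forall a b, g (X a) (X b) = (a == b)%:R.
Hypothesis X_sp : forall (k : 'I_n) (i : 'I_3) (a b : 'I_(4 * n)),
  val a = (4 * k)%N -> val b = (4 * k + i.+1)%N -> J i (X a) = X b.

Lemma J_frame_scaled i a : exists c (s : R), J i (X a) = s *: X c.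
Proof.
have kn : (a %/ 4 < n)%N by have := ltn_ord a; lia.
pose k := Ordinal kn.
have frame_at m : (m < 4)%N -> exists b : 'I_(4 * n), val b = (4 * k + m)%N.
  move=> lt_m4; have lt_b : (4 * k + m < 4 * n)%N by rewrite /=; lia.
  by exists (Ordinal lt_b).
have [a0 a0E] := frame_at 0%N isT; rewrite addn0 in a0E.
have Ja0 l : exists b, J l (X a0) = X b.
  by have [b bE] := frame_at l.+1 (ltn_ord l); exists b; exact: X_sp bE.
(* With a = 4k + r, X a is X a0 if r = 0 and J_(r-1) (X a0) otherwise. *)
have := divn_eq a 4; case r: (a %% 4)%N => [|r'] aE.
  have -> : a = a0 by apply: val_inj; rewrite /= a0E /=; lia.
  by have [b ->] := Ja0 i; exists b, 1; rewrite scale1r.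
have lt_r3 : (r' < 3)%N by have := ltn_pmod a (isT : (0 < 4)%N); rewrite r.
have -> : X a = J (Ordinal lt_r3) (X a0) by apply/esym/(X_sp (k := k)) => //=; lia.
have [<-|ne] := eqVneq i (Ordinal lt_r3).
  by exists a0, (-1); rewrite JJ // scaleN1r.
have [l [s E]] := J_mul_neq ne; have [b Eb] := Ja0 l.
by exists b, s; rewrite E // Eb.
Qed.

Lemma parseval_J_frame i j a :
  \sum_b g (J i (X a)) (X b) * g (J j (X a)) (X b) = g (J j (X a)) (J i (X a)).
Proof.
have [c [s ->]] := J_frame_scaled i a; rewrite (gZr _ (XH c) (JH j (XH a))).
under eq_bigr => b _ do rewrite gZl // X_orthonormal.
rewrite (bigD1 c) //= big1 ?addr0 => [|b ne]; first by rewrite eqxx mulr1.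
by rewrite eq_sym (negbTE ne) mulr0 mul0r.
Qed.

Lemma sum_g_J_frame i j :
  \sum_(a < 4 * n) \sum_(b < 4 * n) g (J i (X a)) (X b) * g (J j (X a)) (X b) =
  (i == j)%:R * (4 * n)%:R.
Proof.
under eq_bigr => a _ do rewrite parseval_J_frame g_J_J // X_orthonormal eqxx mulr1.
by rewrite sumr_const card_ord mulr_natr eq_sym.
Qed.

End QuaternionicFrame.

Theorem lemma4p1 (R : realType) (n N : nat) (U : set 'rV[R]_N)
  (eta : 'I_3 -> 'rV[R]_N -> 'rV[R]_N) (I : 'I_3 -> 'rV[R]_N -> 'rV[R]_N -> 'rV[R]_N)
  (gH : 'rV[R]_N -> 'rV[R]_N -> 'rV[R]_N -> R) (Vr : 'I_3 -> 'rV[R]_N -> 'rV[R]_N)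
  (X : 'I_(4 * n) -> 'rV[R]_N -> 'rV[R]_N) :
  qc_local_frame U eta I gH Vr X ->
  forall p, U p ->
    popp_coeff eta X p = 1 / Num.sqrt (((16 * n)%:R : R) ^+ 3).
Proof.
case=> _ _ oU qc p Up.
have [deta [dX [_ [[gP [g_sym _]] [[JH [JP [JJ J012]]] [gJ [_ [XH [Xon X_sp]]]]]]]]] :=
  qc p Up.
have X_near_horizontal i a : \forall q \near p, pair (eta i q) (X a q) = 0.
  apply: filterS (open_nbhs_nbhs (conj oU Up)) => q /qc.
  by case=> _ [_ [_ [_ [_ [_ [_ [XHq _]]]]]]]; exact: XHq.
have H0 : horizontal eta p 0 by move=> i; exact: pair0r.
have HP a u v : horizontal eta p u -> horizontal eta p v ->
    horizontal eta p (a *: u + v).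
  by move=> hu hv i; rewrite pairPr hu hv mulr0 addr0.
have J_skew i u v : horizontal eta p u -> horizontal eta p v ->
    gH p (I i p u) v = - gH p u (I i p v).
  move=> hu hv; have := gJ i _ _ hv hu; rewrite (g_sym _ _ (JH i v hv) hu) => gJvu.
  by have := gJ i _ _ hu hv; rewrite dform_antisym -gJvu; lra.
have b_g i a b : bcoef eta X p i a b = -2 * gH p (I i p (X a p)) (X b p).
  by rewrite /bcoef pair_lie_bracket_orth // -gJ // mulNr.
rewrite /popp_coeff; suff -> : Bmx eta X p = ((16 * n)%:R : R)%:M by rewrite det_scalar.
apply/matrixP => i j; rewrite !mxE.
under eq_bigr => a _ do under eq_bigr => b _ do rewrite !b_g mulrACA.
under eq_bigr => a _ do rewrite -mulr_sumr.
rewrite -mulr_sumr.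
rewrite (sum_g_J_frame H0 HP gP g_sym JH JP JJ J012 J_skew XH Xon X_sp).
have -> : -2 * -2 = 4%:R :> R by rewrite mulrNN -natrM.
case: (i == j) => /=; last by rewrite !mul0r mulr0.
by rewrite mul1r -natrM mulnA.
Qed.
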